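(* Let $G$ be a finite group and suppose $G$ has a subgroup $H$ admitting a nontrivial homomorphism $\phi: H \to \{\pm 1\}$. Suppose further that there is a set $T$ of representatives of the left cosets of $H$ in $G$ such that $c^2 = 1$ for all $c \in T$. Then there is a function $f: G \to \{\pm 1\}$ with $\mathbb{E}_{x\in G} f(x) = 0$ and \[ \Pr_{x,y}\,[f(x)f(y) = f(xy)] \ge \frac{1}{2}\left(1 + \frac{|H|}{|G|}\right), \] where $x,y$ are chosen uniformly and independently from $G$.
   Context: $\mathbb{E}$ denotes the average over the uniform distribution on $G$. *)

From HB Require Import structures.
From mathcomp Require Import all_boot all_order all_algebra all_fingroup.
Set Implicit Arguments. Unset Strict Implicit. Unset Printing Implicit Defensive.

(* Choose a sign s c for every representative c in T and extend phi to G by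
   f (c h) = s c * phi h.  Since f (x h) = f x * phi h and phi takes the value -1,
   f has mean zero.  The agreement probability is (1 + E f x f y f (x y)) / 2, and
   averaged over all choices of signs, f x f y f (x y) survives only when the four
   representatives of H, x H, y H and x y H pair up.  For y in H the product is 1,
   contributing |G| |H|; the other surviving terms are x in H with x ^ y in H, and
   x in d H (d the representative of y) with u ^ d in H, and on each family the
   product is the +-1 character h |-> phi h * phi (h ^ g) of H :&: H :^ g^-1,
   whose sum is nonnegative.  Hence some choice of signs gives
   sum_(x, y) f x f y f (x y) >= |G| |H|. *)

From HB Require Import structures.
From mathcomp Require Import all_boot all_order all_algebra all_fingroup.
From mathcomp Require Import ring lra.
Import GRing.Theory Num.Theory Order.TTheory.
Set Implicit Arguments. Unset Strict Implicit.
Local Open Scope ring_scope.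

Section Signs.
Variable R : numDomainType.

Definition is_sign (x : R) := x = 1 \/ x = -1.

Lemma is_signM x y : is_sign x -> is_sign y -> is_sign (x * y).
Proof. by case=> ->; case=> ->; rewrite /is_sign ?mulr1 ?mulrN1 ?opprK; auto. Qed.

Lemma is_sign_mulss x : is_sign x -> x * x = 1.
Proof. by case=> ->; rewrite ?mulr1 ?mulrNN ?mulr1. Qed.

Lemma sumr_sign_reversing_eq0 (I : finType) (P : pred I) (F : I -> R) (p : I -> I) :
  injective p -> (forall i, P (p i) = P i) -> (forall i, P i -> F (p i) = - F i) ->
  \sum_(i | P i) F i = 0.
Proof.
move=> p_inj Pp Fp; apply/eqP.
suff: (\sum_(i | P i) F i) *+ 2 == 0 by rewrite mulrn_eq0.
rewrite mulr2n {1}(reindex_inj p_inj) /= (eq_bigl _ _ Pp) (eq_bigr _ Fp) sumrN.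
by rewrite addNr.
Qed.

Lemma sum_sign_morph_ge0 (gT : finGroupType) (K : {group gT}) (psi : gT -> R) :
  {in K, forall x, is_sign (psi x)} ->
  {in K &, {morph psi : x y / (x * y)%g >-> x * y}} ->
  0 <= \sum_(x in K) psi x.
Proof.
move=> psi_sign psiM.
have [/existsP[a /andP[aK /eqP psia]] | psi1] := boolP [exists a in K, psi a == -1].
  rewrite (sumr_sign_reversing_eq0 (p := fun x => (a * x)%g)) //; first exact: mulgI.
    by move=> x; rewrite groupMl.
  by move=> x xK; rewrite psiM // psia mulN1r.
apply: sumr_ge0 => x xK; have [-> // | psix] := psi_sign x xK.
by move/existsPn: psi1 => /(_ x); rewrite xK psix eqxx.
Qed.

End Signs.

Lemma exists_ge_of_sum_ge (R : realDomainType) (I : finType) (i0 : I)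
    (F : I -> R) (c : R) :
  \sum_(i : I) c <= \sum_i F i -> exists i, c <= F i.
Proof.
move=> le_sum; apply/existsP; apply: contraLR le_sum => /existsPn F_lt.
rewrite -ltNge; apply: ltr_sum => [|i _]; first by apply/hasP; exists i0.
by rewrite ltNge F_lt.
Qed.

Section RandomSigns.
Variables (R : numDomainType) (T : finType).

Definition rsign (A : {set T}) (c : T) : R := (-1) ^+ (c \in A).

Lemma rsign_sqr A c : rsign A c * rsign A c = 1.
Proof. by rewrite -signr_addb addbb. Qed.

Definition toggle (z : T) (A : {set T}) := if z \in A then A :\ z else z |: A.

Lemma in_toggle z A w : (w \in toggle z A) = (w == z) (+) (w \in A).
Proof.
by rewrite /toggle; case: ifP => zA; rewrite !inE; case: eqP => [->|]; rewrite ?zA.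
Qed.

Lemma toggleK z : involutive (toggle z).
Proof. by move=> A; apply/setP => w; rewrite !in_toggle addbA addbb. Qed.

Lemma rsign_toggle z A w : rsign (toggle z A) w = (-1) ^+ (w == z) * rsign A w.
Proof. by rewrite /rsign in_toggle signr_addb. Qed.

Lemma sum_rsign4_eq0 z a b c : z != a -> z != b -> z != c ->
  \sum_(A : {set T}) rsign A z * rsign A a * rsign A b * rsign A c = 0.
Proof.
move=> za zb zc; rewrite (sumr_sign_reversing_eq0 (p := toggle z)) //.
  exact: can_inj (toggleK z).
move=> A _; rewrite !rsign_toggle eqxx !(eq_sym _ z) (negbTE za) (negbTE zb).
by rewrite (negbTE zc) !mul1r !mulN1r !mulNr.
Qed.

Definition paired (a b c d : T) :=
  [|| (a == b) && (c == d), (a == c) && (b == d) | (a == d) && (b == c)].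

Lemma sum_rsign4 a b c d :
  \sum_(A : {set T}) rsign A a * rsign A b * rsign A c * rsign A d =
  if paired a b c d then #|{set T}|%:R else 0.
Proof.
have perm4 (p q u v : T) : \sum_(A : {set T}) rsign A p * rsign A q * rsign A u * rsign A v
    = \sum_(A : {set T}) rsign A v * rsign A p * rsign A q * rsign A u.
  by apply: eq_bigr => A _; ring.
case: ifP => [pair_abcd | /negbT].
  rewrite -[RHS]sumr_const; apply: eq_bigr => A _.
  rewrite /rsign -!signr_addb.
  by case/or3P: pair_abcd => /andP[/eqP<- /eqP<-]; case: (a \in A); case: (_ \in A).
(* An unpaired quadruple has a point occurring exactly once. *)
rewrite /paired; have [<- | ab] := eqVneq a b.
  rewrite /= => /norP[cd _]; move: cd; have [-> | ca] := eqVneq c a => cd.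
    by rewrite perm4 sum_rsign4_eq0 // eq_sym.
  by rewrite perm4 perm4 sum_rsign4_eq0.
have [<- | ac] := eqVneq a c.
  by rewrite /= => /norP[bd _]; rewrite perm4 perm4 perm4 sum_rsign4_eq0 // eq_sym.
have [<- | ad] := eqVneq a d; last by rewrite sum_rsign4_eq0.
by rewrite /= => bc; rewrite perm4 perm4 perm4 sum_rsign4_eq0 // eq_sym.
Qed.

End RandomSigns.

Arguments rsign {R T} A c.

Lemma sign_eq_indicator (R : realFieldType) (a b c : R) :
  is_sign a -> is_sign b -> is_sign c ->
  (if a * b == c then 1 else 0) = (1 + a * b * c) / 2.
Proof.
have N1_lt1 : -1 < 1 :> R by lra.
case=> ->; case=> ->; case=> ->;
  rewrite ?mul1r ?mulN1r ?opprK ?eqxx ?(lt_eqF N1_lt1) ?(gt_eqF N1_lt1); lra.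
Qed.

Lemma card_sign_agree (R : realFieldType) (gT : finGroupType) (G : {group gT})
    (f : gT -> R) :
  {in G, forall x, is_sign (f x)} ->
  #|[set p in setX G G | f p.1 * f p.2 == f (p.1 * p.2)%g]|%:R =
  (#|G|%:R ^+ 2 + \sum_(x in G) \sum_(y in G) f x * f y * f (x * y)%g) / 2.
Proof.
move=> f_sign; rewrite -sum1_card natr_sum.
transitivity (\sum_(x in G) \sum_(y in G) (if f x * f y == f (x * y)%g then 1 else 0) : R).
  rewrite pair_big_dep /= big_mkcond [RHS]big_mkcond /=.
  apply: eq_bigr => -[x y] _; rewrite !inE /=.
  by case: (x \in G); case: (y \in G); case: (_ == _).
have -> : #|G|%:R ^+ 2 = \sum_(x in G) \sum_(y in G) (1 : R).
  by rewrite !sumr_const expr2 mulr_natr.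
rewrite -big_split mulr_suml; apply: eq_bigr => x xG.
rewrite -big_split mulr_suml; apply: eq_bigr => y yG /=.
by rewrite sign_eq_indicator //; apply: f_sign => //; apply: groupM.
Qed.

Section TransversalSigns.
Variables (R : realFieldType) (gT : finGroupType) (G H : {group gT}).
Local Open Scope group_scope.
Variables (phi : gT -> R) (T : {set gT}).
Hypotheses (sHG : H \subset G) (phi_sign : {in H, forall h, is_sign (phi h)}).
Hypothesis phiM : {in H &, {morph phi : x y / x * y >-> (x * y)%R}}.
Hypothesis trT : is_transversal T (lcosets H G) G.
Hypothesis T_invol : forall c, c \in T -> c ^+ 2 = 1.

Definition rep (g : gT) := transversal_repr 1 T (g *: H).
Definition hpart (g : gT) := (rep g)^-1 * g.
Local Notation c1 := (rep 1).

Lemma lcoset_mem_lcosets g : g \in G -> g *: H \in lcosets H G.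
Proof. by move=> gG; rewrite mem_lcosets mulGSid. Qed.

Lemma rep_mem g : g \in G -> rep g \in T.
Proof. by move=> gG; apply: (repr_mem_transversal trT 1 (lcoset_mem_lcosets gG)). Qed.

Lemma hpart_mem g : g \in G -> hpart g \in H.
Proof.
move=> gG; have := repr_mem_pblock trT 1 (lcoset_mem_lcosets gG).
by rewrite mem_lcoset -groupV invMg invgK.
Qed.

Lemma rep_eq g c : g \in G -> c \in T -> c^-1 * g \in H -> rep g = c.
Proof.
move=> gG cT cgH; have : c \in T :&: g *: H.
  by rewrite inE cT mem_lcoset -groupV invMg invgK.
by rewrite (setI_transversal_pblock trT 1 (lcoset_mem_lcosets gG)) => /set1P.
Qed.

Lemma rep_mulr g k : g \in G -> k \in H -> rep (g * k) = rep g.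
Proof.
move=> gG kH; have kG := subsetP sHG k kH.
by apply: rep_eq; [rewrite groupM | rewrite rep_mem | rewrite mulgA groupM ?hpart_mem].
Qed.

Lemma rep1_mem : c1 \in H.
Proof. by have := hpart_mem (group1 G); rewrite /hpart mulg1 groupV. Qed.

Lemma rep_eqE g c : g \in G -> c \in T -> (rep g == c) = (c^-1 * g \in H).
Proof. by move=> gG cT; apply/eqP/idP => [<- | ]; [exact: hpart_mem | exact: rep_eq]. Qed.

Lemma memH_rep x : x \in G -> (x \in H) = (rep x == c1).
Proof. by move=> xG; rewrite rep_eqE ?rep_mem // groupMl // groupV rep1_mem. Qed.

Lemma invg_rep g : g \in G -> (rep g)^-1 = rep g.
Proof.
move=> gG; have := T_invol (rep_mem gG); rewrite expg2 => rep_sqr.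
by rewrite -[_^-1]mulg1 -rep_sqr mulKg.
Qed.

Lemma phi_mulss h : h \in H -> (phi h * phi h = 1)%R.
Proof. by move=> hH; apply/is_sign_mulss/phi_sign. Qed.

Lemma phi1 : phi 1 = 1%R.
Proof.
have := phiM (group1 H) (group1 H); rewrite mulg1.
by case: (phi_sign (group1 H)) => ->; rewrite ?mulrNN ?mulr1.
Qed.

Lemma phiV h : h \in H -> phi h^-1 = phi h.
Proof.
move=> hH; have := phiM hH (groupVr hH); rewrite mulgV phi1 => phi_hhV.
by rewrite -[phi h^-1]mul1r -(phi_mulss hH) -mulrA -phi_hhV mulr1.
Qed.

(* On H this is phi itself; on the coset c H it is phi of the H-component times
   the sign attached to c by A. *)
Definition fsign (A : {set gT}) (g : gT) : R :=
  (phi c1 * rsign A c1 * rsign A (rep g) * phi (hpart g))%R.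

Lemma fsign_sign A g : g \in G -> is_sign (fsign A g).
Proof.
have rsign_sign c : is_sign (rsign A c) by rewrite /rsign /is_sign; case: (c \in A); auto.
move=> gG; apply: is_signM; last exact/phi_sign/hpart_mem.
by do 2!apply: is_signM => //; exact: phi_sign rep1_mem.
Qed.

Lemma fsign_mulr A g k : g \in G -> k \in H -> fsign A (g * k) = (fsign A g * phi k)%R.
Proof.
move=> gG kH; rewrite /fsign /hpart rep_mulr // mulgA phiM ?mulrA //.
exact: hpart_mem.
Qed.

Lemma sum_fsign A : (exists2 h, h \in H & phi h = (-1)%R) ->
  (\sum_(g in G) fsign A g = 0)%R.
Proof.
case=> h hH phi_h; have hG := subsetP sHG h hH.
apply: (sumr_sign_reversing_eq0 (p := fun g => g * h)) => [|g|g gG].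
- exact: mulIg.
- by rewrite groupMr.
- by rewrite fsign_mulr // phi_h mulrN1.
Qed.

Definition weight (x y : gT) : R :=
  (phi c1 * phi (hpart x) * phi (hpart y) * phi (hpart (x * y)))%R.

Lemma fsign_triple A x y :
  (fsign A x * fsign A y * fsign A (x * y) =
   rsign A c1 * rsign A (rep x) * rsign A (rep y) * rsign A (rep (x * y))
     * weight x y)%R.
Proof.
have phi_c1 := phi_mulss rep1_mem; have rsign_c1 := rsign_sqr R A c1.
rewrite /fsign /weight; ring: phi_c1 rsign_c1.
Qed.

Lemma sum_fsign_triple x y :
  (\sum_(A : {set gT}) fsign A x * fsign A y * fsign A (x * y) =
   (if paired c1 (rep x) (rep y) (rep (x * y)) then #|{set gT}|%:R else 0)
     * weight x y)%R.
Proof. by rewrite -sum_rsign4 mulr_suml; apply: eq_bigr => A _; apply: fsign_triple. Qed.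

Lemma sum_conj_sign_ge0 g : (0 <= \sum_(x in H :&: H :^ g^-1) phi x * phi (x ^ g))%R.
Proof.
have memK x : (x \in H :&: H :^ g^-1) = (x \in H) && (x ^ g \in H).
  by rewrite inE mem_conjg invgK.
apply: sum_sign_morph_ge0 => [x | x z]; rewrite !memK.
  by case/andP=> xH xgH; apply: is_signM; apply: phi_sign.
case/andP=> xH xgH /andP[zH zgH].
by rewrite /= conjMg (phiM xH zH) (phiM xgH zgH); ring.
Qed.

Lemma sum_weight_left y : y \in G ->
  (\sum_(x in G | (x \in H) && (rep (x * y) == rep y)) weight x y =
   \sum_(x in H :&: H :^ y^-1) phi x * phi (x ^ y))%R.
Proof.
move=> yG; have hyH := hpart_mem yG.
have hpart_xy x : (rep y)^-1 * (x * y) = hpart y * x ^ y.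
  by rewrite /hpart conjgE !mulgA mulgK.
have rep_xy x : x \in H -> (rep (x * y) == rep y) = (x ^ y \in H).
  move=> xH; have xyG := groupM (subsetP sHG x xH) yG.
  by rewrite rep_eqE ?rep_mem // hpart_xy groupMl.
apply: eq_big => [x | x /andP[xG /andP[xH /eqP rep_x_y]]].
  rewrite inE mem_conjg invgK; case xH: (x \in H); last by rewrite andbF.
  by rewrite (subsetP sHG) ?rep_xy.
have xyH : x ^ y \in H by rewrite -rep_xy // rep_x_y.
have /eqP rep_x : rep x == c1 by rewrite -memH_rep.
rewrite /weight {3}/hpart rep_x_y hpart_xy [hpart x]/hpart rep_x.
rewrite (phiM (groupVr rep1_mem) xH) phiV ?rep1_mem // (phiM hyH xyH).
have phi_c1 := phi_mulss rep1_mem; have phi_hy := phi_mulss hyH.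
by ring: phi_c1 phi_hy.
Qed.

Lemma sum_weight_right y : y \in G ->
  (\sum_(x in G | (rep x == rep y) && ((x * y)%g \in H)) weight x y =
   \sum_(u in H :&: H :^ (rep y)^-1) phi u * phi (u ^ rep y))%R.
Proof.
move=> yG; have hyH := hpart_mem yG.
have dG : rep y \in G := subsetP (transversal_sub trT) _ (rep_mem yG).
(* The only use of c ^+ 2 = 1: it lets d u y be rewritten as u ^ d * d^-1 y. *)
have duy u : rep y * u * y = u ^ rep y * hpart y.
  by rewrite conjgE /hpart !mulgA mulgK invg_rep.
rewrite (reindex_inj (mulgI (rep y))) /=.
apply: eq_big => [u | u /andP[duG /andP[/eqP rep_du duyH]]].
  rewrite inE mem_conjg invgK groupMl //.
  have [uG | uNG] := boolP (u \in G); last by rewrite (contraNF (subsetP sHG u)).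
  by rewrite /= rep_eqE ?(rep_mem yG) ?(groupM dG uG) // mulKg duy groupMr.
have uH : u \in H by have := hpart_mem duG; rewrite /hpart rep_du mulKg.
have udH : u ^ rep y \in H by rewrite duy groupMr in duyH.
have /eqP rep_duy : rep (rep y * u * y) == c1 by rewrite -memH_rep ?(groupM duG yG).
rewrite /weight [hpart (_ * u)]/hpart rep_du mulKg [hpart (_ * y)]/hpart rep_duy duy.
rewrite (phiM (groupVr rep1_mem) (groupM udH hyH)) phiV ?rep1_mem // (phiM udH hyH).
have phi_c1 := phi_mulss rep1_mem; have phi_hy := phi_mulss hyH.
by ring: phi_c1 phi_hy.
Qed.

Lemma weight_memH x y : x \in G -> y \in H -> weight x y = 1%R.
Proof.
move=> xG yH; have /eqP rep_y : rep y == c1 by rewrite -memH_rep ?(subsetP sHG).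
have hxH := hpart_mem xG.
rewrite /weight [hpart (x * y)]/hpart rep_mulr // mulgA -/(hpart x) [hpart y]/hpart rep_y.
rewrite (phiM hxH yH) (phiM (groupVr rep1_mem) yH) phiV ?rep1_mem //.
have phi_c1 := phi_mulss rep1_mem; have phi_hx := phi_mulss hxH.
have phi_y := phi_mulss yH.
by ring: phi_c1 phi_hx phi_y.
Qed.

Lemma paired_weight_split x y : x \in G -> y \in G -> y \notin H ->
  ((if paired c1 (rep x) (rep y) (rep (x * y)) then weight x y else 0) =
   (if (x \in H) && (rep (x * y) == rep y) then weight x y else 0)
   + (if (rep x == rep y) && ((x * y)%g \in H) then weight x y else 0))%R.
Proof.
move=> xG yG yNH; have xyG := groupM xG yG.
rewrite /paired (eq_sym c1 (rep y)) -(memH_rep yG) (negbTE yNH) /=.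
rewrite (eq_sym c1 (rep x)) -(memH_rep xG) (eq_sym c1) -(memH_rep xyG).
have [xH | xNH] := boolP (x \in H); rewrite /=.
  have /eqP rep_x : rep x == c1 by rewrite -memH_rep.
  rewrite rep_x (eq_sym c1) -(memH_rep yG) (negbTE yNH) andbF orbF eq_sym.
  by rewrite addr0.
by rewrite add0r andbC.
Qed.

Lemma sum_paired_weight_ge y : y \in G ->
  ((if y \in H then #|G|%:R else 0) <=
   \sum_(x in G) if paired c1 (rep x) (rep y) (rep (x * y)) then weight x y else 0)%R.
Proof.
move=> yG; have [yH | yNH] := boolP (y \in H).
  rewrite (eq_bigr (fun _ => 1%R)) ?sumr_const // => x xG.
  rewrite /paired (eq_sym c1 (rep y)) -(memH_rep yG) yH rep_mulr // eqxx /= orbT.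
  exact: weight_memH.
rewrite (eq_bigr _ (fun x xG => paired_weight_split xG yG yNH)) big_split /=.
rewrite -!big_mkcondr /= sum_weight_left // sum_weight_right //.
by apply: addr_ge0; apply: sum_conj_sign_ge0.
Qed.

Lemma sum_paired_weight_ge_card :
  (#|G|%:R * #|H|%:R <= \sum_(x in G) \sum_(y in G)
     if paired c1 (rep x) (rep y) (rep (x * y)) then weight x y else 0)%R.
Proof.
have -> : (#|G|%:R * #|H|%:R = \sum_(y in G) if y \in H then #|G|%:R else 0 :> R)%R.
  rewrite -big_mkcondr /= (eq_bigl (mem H)) ?sumr_const ?mulr_natr // => y.
  by rewrite andb_idl // => /(subsetP sHG).
by rewrite exchange_big /=; apply: ler_sum => y; apply: sum_paired_weight_ge.
Qed.

Lemma exists_fsign_agreement_ge : exists A : {set gT},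
  (#|G|%:R * #|H|%:R <= \sum_(x in G) \sum_(y in G) fsign A x * fsign A y * fsign A (x * y))%R.
Proof.
apply: (exists_ge_of_sum_ge set0).
have pull b (w : R) : ((if b then #|{set gT}|%:R else 0) * w =
    #|{set gT}|%:R * (if b then w else 0))%R.
  by case: b; rewrite ?mul0r ?mulr0.
rewrite exchange_big; under eq_bigr do rewrite exchange_big.
under eq_bigr do under eq_bigr do rewrite sum_fsign_triple pull.
under eq_bigr do rewrite -mulr_sumr.
rewrite -[X in _ <= X]mulr_sumr sumr_const -[X in X <= _]mulr_natl.
by apply: ler_wpM2l; [exact: ler0n | exact: sum_paired_weight_ge_card].
Qed.

End TransversalSigns.

Local Open Scope group_scope.

Theorem theorem4 (gT : finGroupType) (G H : {group gT}) (phi : gT -> rat)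
    (T : {set gT}) :
  H \subset G ->
  (forall h, h \in H -> phi h = 1%R \/ phi h = (-1)%R) ->
  (forall x y, x \in H -> y \in H -> phi (x * y) = (phi x * phi y)%R) ->
  (exists2 h, h \in H & phi h = (-1)%R) ->
  is_transversal T (lcosets H G) G ->
  (forall c, c \in T -> c ^+ 2 = 1) ->
  exists f : gT -> rat,
    [/\ forall x, x \in G -> f x = 1%R \/ f x = (-1)%R,
        ((\sum_(x in G) f x) / #|G|%:R = 0)%R
      & ((1 / 2 : rat) * (1 + #|H|%:R / #|G|%:R) <=
         #|[set p in setX G G | (f p.1 * f p.2)%R == f (p.1 * p.2)%g]|%:R
           / #|G|%:R ^+ 2)%R].
Proof.
move=> sHG phi_sign phiM phi_nontrivial trT T_invol.
have [A agreement_ge] := exists_fsign_agreement_ge sHG phi_sign phiM trT T_invol.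
have f_sign := fsign_sign sHG phi_sign trT A.
exists (fsign H phi T A); split => //; first by rewrite sum_fsign // mul0r.
rewrite card_sign_agree //.
move: agreement_ge; set S := (\sum_(x in G) _)%R.
have : (0 < #|G|%:R :> rat)%R by rewrite ltr0n; apply/card_gt0P; exists 1.
move: #|G|%:R #|H|%:R => g h g_gt0 gh_le_S.
rewrite -subr_ge0.
have -> : ((g ^+ 2 + S) / 2 / g ^+ 2 - 1 / 2 * (1 + h / g) = (S - g * h) / (2 * g ^+ 2))%R.
  by field; rewrite lt0r_neq0.
by rewrite divr_ge0 ?subr_ge0 // mulr_ge0 ?exprn_ge0 ?ltW.
Qed.
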